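(* Let $R$ be a compact Hausdorff topological semiring and let $A$ be a closed ideal of $R$. Then the relation $\kappa_A=\{(x,y)\in R\times R\mid \exists a,b\in A:\ x+a=y+b\}$ is closed in $R\times R$.
   Context: A semiring is an algebra $(R,+,\cdot,0)$ such that $(R,+,0)$ is a commutative monoid, $(R,\cdot)$ is a semigroup (no multiplicative identity is required), multiplication distributes over addition on both sides, and $0\cdot x = x\cdot 0 = 0$ for all $x\in R$. A topological semiring is a semiring with a topology in which addition and multiplication are continuous. An ideal of $R$ is a submonoid $A$ of $(R,+,0)$ with $RA\cup AR\subseteq A$. *)

From HB Require Import structures.
From mathcomp Require Import all_boot all_order.
From mathcomp Require Import all_classical topology.
Set Implicit Arguments. Unset Strict Implicit. Unset Printing Implicit Defensive.
Local Open Scope classical_set_scope.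

Definition is_semiring (T : Type) (add mul : T -> T -> T) (zero : T) : Prop :=
  [/\ (forall x y z, add x (add y z) = add (add x y) z),
      (forall x y, add x y = add y x),
      (forall x, add zero x = x),
      (forall x y z, mul x (mul y z) = mul (mul x y) z) &
      [/\ (forall x y z, mul x (add y z) = add (mul x y) (mul x z)),
           (forall x y z, mul (add x y) z = add (mul x z) (mul y z)) &
           (forall x, mul zero x = zero /\ mul x zero = zero)]].

Definition is_topological_semiring (T : topologicalType)
    (add mul : T -> T -> T) (zero : T) : Prop :=
  [/\ is_semiring add mul zero,
      continuous (fun p : T * T => add p.1 p.2) &
      continuous (fun p : T * T => mul p.1 p.2)].

Definition is_ideal (T : Type) (add mul : T -> T -> T) (zero : T)
    (A : set T) : Prop :=
  [/\ A zero,
      (forall a b, A a -> A b -> A (add a b)) &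
      (forall r a, A a -> A (mul r a) /\ A (mul a r))].

Definition kappa (T : Type) (add : T -> T -> T) (A : set T) : set (T * T) :=
  [set p | exists a b, A a /\ A b /\ add p.1 a = add p.2 b].

From mathcomp Require Import all_boot all_order.
From mathcomp Require Import all_classical topology.
Local Open Scope classical_set_scope.

(* kappa_A is the image, under the first projection, of the set of
   witnesses ((x, y), (a, b)) with a, b in A and x + a = y + b.  That set is
   closed, being cut out by an equation between continuous maps into a
   Hausdorff space and by the closed condition on a, b; so it is compact in
   the compact space R^4, and its continuous image in the Hausdorff space
   R x R is compact, hence closed. *)

Lemma compact_setTX (U V : topologicalType) :
  compact [set: U] -> compact [set: V] -> compact [set: U * V].
Proof. by move=> cU cV; rewrite -setXTT; exact: compact_setX. Qed.

Lemma hausdorff_prod (U V : topologicalType) :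
  hausdorff_space U -> hausdorff_space V -> hausdorff_space (U * V)%type.
Proof.
move=> hU hV p q clpq; apply: injective_projections; [apply: hU|apply: hV].
- move=> A B /(cvg_fst (G := nbhs p.2)) pA /(cvg_fst (G := nbhs q.2)) qB.
  by have [x [Ax Bx]] := clpq _ _ pA qB; exists x.1.
- move=> A B /(cvg_snd (F := nbhs p.1)) pA /(cvg_snd (F := nbhs q.1)) qB.
  by have [x [Ax Bx]] := clpq _ _ pA qB; exists x.2.
Qed.

Lemma closed_eq_fun (X Y : topologicalType) (f g : X -> Y) :
  hausdorff_space Y -> continuous f -> continuous g ->
  closed [set x | f x = g x].
Proof.
move=> hY cf cg x clx; apply: hY => A B fxA gxB.
have [y [fgy [fyA gyB]]] : [set x | f x = g x] `&` (f @^-1` A `&` g @^-1` B) !=set0.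
  by apply: clx; apply: filterI; [exact: cf|exact: cg].
by exists (f y); split; rewrite // fgy.
Qed.

Lemma closed_image_compact (X Y : topologicalType) (f : X -> Y) (K : set X) :
  compact [set: X] -> hausdorff_space Y -> continuous f -> closed K ->
  closed (f @` K).
Proof.
move=> cX hY cf cK; apply: compact_closed => //.
apply: continuous_compact; first exact: continuous_subspaceT.
exact: subclosed_compact cK cX _.
Qed.

Section KappaWitness.
Variables (T : topologicalType) (add : T -> T -> T) (A : set T).

Definition kappa_witness : set ((T * T) * (T * T)) :=
  [set w | add w.1.1 w.2.1 = add w.1.2 w.2.2] `&`
  (fun w => w.2.1) @^-1` A `&` (fun w => w.2.2) @^-1` A.

Lemma kappa_fst_image : kappa add A = fst @` kappa_witness.
Proof.
apply/seteqP; split=> [[x y] [a [b [Aa [Ab xayb]]]]|_ [[p [a b]] [[/= e Aa] Ab] <-]].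
- by exists ((x, y), (a, b)).
- by exists a, b.
Qed.

Lemma closed_kappa_witness :
  continuous (fun p : T * T => add p.1 p.2) -> hausdorff_space T -> closed A ->
  closed kappa_witness.
Proof.
move=> cadd hT cA.
have c11 : continuous (fun w : (T * T) * (T * T) => w.1.1).
  by move=> w; apply: cvg_comp; exact: cvg_fst.
have c12 : continuous (fun w : (T * T) * (T * T) => w.1.2).
  by move=> w; apply: cvg_comp; [exact: cvg_fst|exact: cvg_snd].
have c21 : continuous (fun w : (T * T) * (T * T) => w.2.1).
  by move=> w; apply: cvg_comp; [exact: cvg_snd|exact: cvg_fst].
have c22 : continuous (fun w : (T * T) * (T * T) => w.2.2).
  by move=> w; apply: cvg_comp; exact: cvg_snd.
apply: closedI; first apply: closedI.
- apply: closed_eq_fun => // w.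
  + by apply: continuous2_cvg; [exact: (cadd (_, _))|exact: c11|exact: c21].
  + by apply: continuous2_cvg; [exact: (cadd (_, _))|exact: c12|exact: c22].
- exact: closed_comp.
- exact: closed_comp.
Qed.

End KappaWitness.

Theorem lemma3p2 (T : topologicalType) (add mul : T -> T -> T) (zero : T)
    (A : set T) :
  is_topological_semiring add mul zero ->
  compact [set: T] -> hausdorff_space T ->
  closed A -> is_ideal add mul zero A ->
  closed (kappa add A).
Proof.
move=> [_ cadd _] cT hT cA _.
rewrite kappa_fst_image; apply: closed_image_compact.
- by do 2!apply: compact_setTX.
- exact: hausdorff_prod.
- by move=> w; exact: cvg_fst.
- exact: closed_kappa_witness.
Qed.
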